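(* Fix any $\pi_0\in\mathbb R^N$ and $Z_0\in\mathbb R^{n_u\times n_x}$, and let $\Pi_0=\Pi(\pi_0)$. Let $\hat L$ be the optimal value (infimum, $+\infty$ if infeasible) of the convex approximation: minimize $(\eta+1)\zeta+\alpha_\pi^\top\pi$ over $S\in\mathbb S^{n_x}$, $Z\in\mathbb R^{n_u\times n_x}$, $\zeta\in\mathbb R$, $\pi\in\mathbb R^N$ subject to $\mathcal C_s(S,\Pi(\pi),Z;\Pi_0,Z_0)\preceq0$, $\mathcal F_2(S,\zeta)\preceq0$, $H\pi\le h$, $0\le\pi\le\mathbf1$. Then $L\le\hat L$, where $L$ is the optimal value of problem (R).
   Context: Let $N\ge1$, $n_{u_1},\dots,n_{u_N}\ge1$, $n_u=\sum_i n_{u_i}$, $n_x,n_w,n_z\ge1$. Fix real matrices $A\in\mathbb R^{n_x\times n_x}$, $B_u\in\mathbb R^{n_x\times n_u}$, $B_w\in\mathbb R^{n_x\times n_w}$, $C_z\in\mathbb R^{n_z\times n_x}$, $D_{wz}\in\mathbb R^{n_z\times n_w}$, constants $\alpha>0$, $\eta>0$, $\alpha_\pi\in\mathbb R^N$, $H\in\mathbb R^{r\times N}$, $h\in\mathbb R^r$. For $\pi\in\mathbb R^N$ let $\Pi(\pi)=\mathrm{blkdiag}(\pi_1 I_{n_{u_1}},\dots,\pi_N I_{n_{u_N}})$. Define $\mathcal F_1(S,Z,\pi)=\begin{bmatrix} AS+SA^\top+\alpha S-B_u\Pi Z-Z^\top\Pi B_u^\top & B_w\\ B_w^\top & -\alpha\eta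 I_{n_w}\end{bmatrix}$ ($\Pi=\Pi(\pi)$), $\mathcal F_2(S,\zeta)=\begin{bmatrix}-S&0&SC_z^\top\\0&-I_{n_w}&D_{wz}^\top\\ C_zS&D_{wz}&-\zeta I_{n_z}\end{bmatrix}$. Problem (R): minimize $(\eta+1)\zeta+\alpha_\pi^\top\pi$ subject to $\mathcal F_1\preceq0$, $\mathcal F_2\preceq0$, $H\pi\le h$, $0\le\pi\le\mathbf1$; optimal value $L$. With $X=B_u\Pi+Z^\top$, $X_0=B_u\Pi_0+Z_0^\top$, let $\mathcal H_{\mathrm{lin}}(\Pi,Z;\Pi_0,Z_0)=X_0X_0^\top-XX_0^\top-X_0X^\top$ and $\mathcal C_s(S,\Pi,Z;\Pi_0,Z_0)=\begin{bmatrix}AS+SA^\top+\alpha S+\tfrac12\mathcal H_{\mathrm{lin}}(\Pi,Z;\Pi_0,Z_0) & \tfrac1{\sqrt2}(B_u\Pi-Z^\top) & B_w\\ \tfrac1{\sqrt2}(B_u\Pi-Z^\top)^\top & -I_{n_u} & 0\\ B_w^\top&0&-\alpha\eta I_{n_w}\end{bmatrix}$. *)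

(* matrices over an arbitrary real closed field R (needs Num.sqrt for 1/sqrt 2). *)
From HB Require Import structures.
From mathcomp Require Import all_boot all_order all_algebra.
Set Implicit Arguments. Unset Strict Implicit. Unset Printing Implicit Defensive.
Import Order.TTheory GRing.Theory Num.Theory.
Local Open Scope ring_scope.

(* Negative semidefiniteness  M ⪯ 0 (M is always symmetric in our uses). *)
Definition nsd {R : numDomainType} {n : nat} (M : 'M[R]_n) : Prop :=
  forall x : 'cV[R]_n, (x^T *m M *m x) 0 0 <= 0.

Definition PiM {R : rcfType} {N : nat} (nu : 'I_N -> nat) (pi : 'cV[R]_N)
  : 'M[R]_((\sum_(i < N) nu i)%N) :=
  mxdiag (fun i : 'I_N => (pi i 0)%:M : 'M[R]_(nu i)).

Unset Implicit Arguments.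
Section Defs.
Variables (R : rcfType) (N : nat) (nu : 'I_N -> nat) (nx nw nz r : nat).
Local Notation nU := ((\sum_(i < N) nu i)%N).
Variables (A : 'M[R]_nx) (Bu : 'M[R]_(nx, nU)) (Bw : 'M[R]_(nx, nw))
  (Cz : 'M[R]_(nz, nx)) (Dwz : 'M[R]_(nz, nw)) (alpha eta : R)
  (alpha_pi : 'cV[R]_N) (H : 'M[R]_(r, N)) (h : 'cV[R]_r).

Definition F1 (S : 'M[R]_nx) (Z : 'M[R]_(nU, nx)) (pi : 'cV[R]_N)
  : 'M[R]_(nx + nw) :=
  let Pi := PiM nu pi in
  block_mx (A *m S + S *m A^T + alpha *: S - Bu *m Pi *m Z - Z^T *m Pi *m Bu^T)
           Bw Bw^T (- (alpha * eta) *: 1%:M).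

Definition F2 (S : 'M[R]_nx) (zeta : R) : 'M[R]_((nx + nw) + nz) :=
  block_mx (block_mx (- S) 0 0 (- 1%:M))
           (col_mx (S *m Cz^T) Dwz^T)
           (row_mx (Cz *m S) Dwz)
           (- zeta *: 1%:M).

Definition Hlin (Pi : 'M[R]_nU) (Z : 'M[R]_(nU, nx))
  (Pi0 : 'M[R]_nU) (Z0 : 'M[R]_(nU, nx)) : 'M[R]_nx :=
  let X := Bu *m Pi + Z^T in
  let X0 := Bu *m Pi0 + Z0^T in
  X0 *m X0^T - X *m X0^T - X0 *m X^T.

Definition Cs (S : 'M[R]_nx) (Pi : 'M[R]_nU) (Z : 'M[R]_(nU, nx))
  (Pi0 : 'M[R]_nU) (Z0 : 'M[R]_(nU, nx)) : 'M[R]_((nx + nU) + nw) :=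
  let c := (Num.sqrt (2 : R))^-1 in
  let Y := c *: (Bu *m Pi - Z^T) in
  block_mx (block_mx (A *m S + S *m A^T + alpha *: S + 2^-1 *: Hlin Pi Z Pi0 Z0)
                     Y Y^T (- 1%:M))
           (col_mx Bw 0)
           (row_mx Bw^T 0)
           (- (alpha * eta) *: 1%:M).

Definition pi_ok (pi : 'cV[R]_N) : Prop :=
  (forall k, (H *m pi) k 0 <= h k 0) /\ (forall i, 0 <= pi i 0 <= 1).

Definition objective (zeta : R) (pi : 'cV[R]_N) : R :=
  (eta + 1) * zeta + (alpha_pi^T *m pi) 0 0.

Definition feasible_R (S : 'M[R]_nx) (Z : 'M[R]_(nU, nx)) (zeta : R)
  (pi : 'cV[R]_N) : Prop :=
  S^T = S /\ nsd (F1 S Z pi) /\ nsd (F2 S zeta) /\ pi_ok pi.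

Definition feasible_C (pi0 : 'cV[R]_N) (Z0 : 'M[R]_(nU, nx))
  (S : 'M[R]_nx) (Z : 'M[R]_(nU, nx)) (zeta : R) (pi : 'cV[R]_N) : Prop :=
  S^T = S /\ nsd (Cs S (PiM nu pi) Z (PiM nu pi0) Z0) /\ nsd (F2 S zeta)
  /\ pi_ok pi.

(* b is a lower bound of the objective on the feasible set of (R), i.e. b <= L *)
Definition lb_R (b : R) : Prop :=
  forall S Z zeta pi, feasible_R S Z zeta pi -> b <= objective zeta pi.

Definition lb_C (pi0 : 'cV[R]_N) (Z0 : 'M[R]_(nU, nx)) (b : R) : Prop :=
  forall S Z zeta pi, feasible_C pi0 Z0 S Z zeta pi -> b <= objective zeta pi.

End Defs.

From HB Require Import structures.
From mathcomp Require Import all_boot all_order all_algebra.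
From mathcomp Require Import ring lra.
Import Order.TTheory GRing.Theory Num.Theory.
Local Open Scope ring_scope.

(* Write B = Bu Pi, X = B + Z^T and Y = (B - Z^T)/sqrt 2.  The indefinite term
   -B Z - Z^T B^T of F1 equals (1/2) Hlin + Y Y^T - (1/2)(X - X0)(X - X0)^T, and
   the last summand is negative semidefinite, so F1 is dominated by the matrix
   with upper-left block M + (1/2) Hlin + Y Y^T.  Testing Cs at (x, Y^T x, w)
   eliminates its -I block (a Schur complement) and shows that this dominating
   matrix is negative semidefinite.  So the convex approximation has a smaller
   feasible set than (R), whence L <= Lhat. *)

Lemma cross_sum_linearization (R : realFieldType) (n m : nat)
    (B Zt X0 : 'M[R]_(n, m)) :
  - (B *m Zt^T) - Zt *m B^T =
    2^-1 *: (X0 *m X0^T - (B + Zt) *m X0^T - X0 *m (B + Zt)^T)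
  + 2^-1 *: ((B - Zt) *m (B - Zt)^T)
  - 2^-1 *: ((B + Zt - X0) *m (B + Zt - X0)^T).
Proof.
rewrite ?raddfB ?raddfD /= ?(mulmxDl, mulmxDr, mulmxBl, mulmxBr, mulNmx, mulmxN).
move: (B *m B^T) (B *m Zt^T) (B *m X0^T) (Zt *m B^T) (Zt *m Zt^T) (Zt *m X0^T)
  (X0 *m B^T) (X0 *m Zt^T) (X0 *m X0^T) => K1 K2 K3 K4 K5 K6 K7 K8 K9.
by apply/matrixP => i j; rewrite !mxE; lra.
Qed.

Lemma mulmx_tr_block (R : pzRingType) (m n : nat) (a : 'M[R]_m) (b : 'M[R]_(m, n))
    (c : 'M[R]_(n, m)) (d : 'M[R]_n) (x : 'cV[R]_m) (w : 'cV[R]_n) :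
  (col_mx x w)^T *m block_mx a b c d *m col_mx x w =
  x^T *m a *m x + x^T *m b *m w + (w^T *m c *m x + w^T *m d *m w).
Proof.
by rewrite tr_col_mx mul_row_block mul_row_col !mulmxDl ?mulmxA addrACA.
Qed.

Lemma gram_form_ge0 (R : realDomainType) (m n : nat) (D : 'M[R]_(m, n))
    (x : 'cV[R]_m) :
  0 <= (x^T *m (D *m D^T) *m x) 0 0.
Proof.
have -> : x^T *m (D *m D^T) *m x = (D^T *m x)^T *m (D^T *m x).
  by rewrite trmx_mul trmxK !mulmxA.
rewrite mxE.
by apply: sumr_ge0 => i _; rewrite mxE -expr2 sqr_ge0.
Qed.

Lemma trmx_PiM (R : rcfType) (N : nat) (nu : 'I_N -> nat) (pi : 'cV[R]_N) :
  (PiM nu pi)^T = PiM nu pi.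
Proof. by rewrite /PiM tr_mxdiag; apply: eq_mxdiag => i; rewrite tr_scalar_mx. Qed.

Lemma invr_sqrt2_sqr (R : rcfType) :
  (Num.sqrt (2 : R))^-1 * (Num.sqrt (2 : R))^-1 = 2^-1.
Proof. by rewrite -invfM -expr2 sqr_sqrtr // ler0n. Qed.

Section NsdBlock.

Variables (R : realFieldType) (m k n : nat).
Variables (P : 'M[R]_m) (B : 'M[R]_(m, n)) (C : 'M[R]_(n, m)) (Q : 'M[R]_n).

Lemma nsd_block_schur_lift (Y : 'M[R]_(m, k)) :
  nsd (block_mx (block_mx P Y Y^T (- 1%:M)) (col_mx B 0) (row_mx C 0) Q) ->
  nsd (block_mx (P + Y *m Y^T) B C Q).
Proof.
move=> hnsd v; rewrite -(vsubmxK v); move: (usubmx v) (dsubmx v) => x w.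
have := hnsd (col_mx (col_mx x (Y^T *m x)) w).
rewrite !mulmx_tr_block tr_col_mx mul_row_col mulmx0 addr0.
rewrite -[w^T *m row_mx _ _ *m _]mulmxA mul_row_col mul0mx addr0.
rewrite trmx_mul trmxK mulmxN mulmx1 mulNmx mulmxDr mulmxDl !mulmxA.
by rewrite !mxE; lra.
Qed.

Lemma nsd_block_subl (G : 'M[R]_m) :
  (forall x : 'cV[R]_m, 0 <= (x^T *m G *m x) 0 0) ->
  nsd (block_mx P B C Q) -> nsd (block_mx (P - G) B C Q).
Proof.
move=> hG hnsd v; rewrite -(vsubmxK v); move: (usubmx v) (dsubmx v) => x w.
have := hnsd (col_mx x w); have := hG x.
rewrite !mulmx_tr_block mulmxBr mulmxBl.
by rewrite !mxE; lra.
Qed.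

End NsdBlock.

Section Approximation.

Variables (R : rcfType) (N : nat) (nu : 'I_N -> nat) (nx nw : nat).
Local Notation nU := ((\sum_(i < N) nu i)%N).
Variables (A : 'M[R]_nx) (Bu : 'M[R]_(nx, nU)) (Bw : 'M[R]_(nx, nw))
  (alpha eta : R).

Lemma nsd_F1_of_Cs (S : 'M[R]_nx) (Z Z0 : 'M[R]_(nU, nx)) (pi pi0 : 'cV[R]_N) :
  nsd (Cs R N nu nx nw A Bu Bw alpha eta S (PiM nu pi) Z (PiM nu pi0) Z0) ->
  nsd (F1 R N nu nx nw A Bu Bw alpha eta S Z pi).
Proof.
rewrite /Cs /F1 /=.
set Pi := PiM nu pi; set Pi0 := PiM nu pi0.
set Y := (Num.sqrt 2)^-1 *: (Bu *m Pi - Z^T).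
set M0 := A *m S + S *m A^T + alpha *: S.
set D := Bu *m Pi + Z^T - (Bu *m Pi0 + Z0^T).
have -> : M0 - Bu *m Pi *m Z - Z^T *m Pi *m Bu^T =
    M0 + 2^-1 *: Hlin R N nu nx Bu Pi Z Pi0 Z0 + Y *m Y^T - 2^-1 *: (D *m D^T).
  have -> : Y *m Y^T = 2^-1 *: ((Bu *m Pi - Z^T) *m (Bu *m Pi - Z^T)^T).
    by rewrite /Y linearZ /= -scalemxAl -scalemxAr scalerA invr_sqrt2_sqr.
  have -> : Bu *m Pi *m Z = Bu *m Pi *m Z^T^T by rewrite trmxK.
  have -> : Z^T *m Pi *m Bu^T = Z^T *m (Bu *m Pi)^T.
    by rewrite trmx_mul trmx_PiM mulmxA.
  by rewrite -[LHS]addrA (cross_sum_linearization _ _ _ _ _ (Bu *m Pi0 + Z0^T)) !addrA.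
move=> hCs; apply: nsd_block_subl; last exact: nsd_block_schur_lift.
move=> x; rewrite -scalemxAr -scalemxAl mxE.
by apply: mulr_ge0; [rewrite invr_ge0 ler0n | exact: gram_form_ge0].
Qed.

End Approximation.

Theorem corollary2 (R : rcfType) (N : nat) (nu : 'I_N -> nat)
  (nx nw nz r : nat)
  (A : 'M[R]_nx) (Bu : 'M[R]_(nx, (\sum_(i < N) nu i)%N)) (Bw : 'M[R]_(nx, nw))
  (Cz : 'M[R]_(nz, nx)) (Dwz : 'M[R]_(nz, nw)) (alpha eta : R)
  (alpha_pi : 'cV[R]_N) (H : 'M[R]_(r, N)) (h : 'cV[R]_r)
  (hN : (0 < N)%N) (hnu : forall i, (0 < nu i)%N)
  (hnx : (0 < nx)%N) (hnw : (0 < nw)%N) (hnz : (0 < nz)%N)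
  (halpha : 0 < alpha) (heta : 0 < eta)
  (pi0 : 'cV[R]_N) (Z0 : 'M[R]_((\sum_(i < N) nu i)%N, nx)) :
  forall b : R,
    lb_R R N nu nx nw nz r A Bu Bw Cz Dwz alpha eta alpha_pi H h b ->
    lb_C R N nu nx nw nz r A Bu Bw Cz Dwz alpha eta alpha_pi H h pi0 Z0 b.
Proof.
move=> b hb S Z zeta pi [hS [hCs [hF2 hpi]]].
apply: (hb S Z zeta pi).
by split; [|split; [exact: nsd_F1_of_Cs hCs|]].
Qed.
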